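(* Let $G$ be a locally compact group, $\omega$ a weight on $G$, $1\le p<\infty$, and assume $L^p(G,\omega)$ is a Banach algebra under convolution. If for some positive number $\gamma$ and some $x\in G$ the operator $\gamma\,l_x$ on $L^p(G,\omega)$ is both a left multiplier of $L^p(G,\omega)$ and an algebra isomorphism, then $\gamma=1$ and $x=e_G$.
   Context: A weight on $G$ is a positive continuous function $\omega:G\to\mathbb{R}^+$ with $\omega(xy)\le\omega(x)\omega(y)$ for all $x,y\in G$ and $\omega(e_G)=1$. $L^p(G,\omega)$ is the space of measurable $f:G\to\mathbb{C}$ with $\|f\|_{p,\omega}:=\left(\int_G|f(x)|^p\omega(x)^p\,dx\right)^{1/p}<\infty$, with convolution product. The left translation is $l_xf(y)=f(x^{-1}y)$. A linear operator $L$ on $L^p(G,\omega)$ is a left multiplier if $L(f*g)=L(f)*g$ for all $f,g\in L^p(G,\omega)$. *)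

From HB Require Import structures.
From mathcomp Require Import all_boot all_order all_algebra.
From mathcomp Require Import all_classical all_reals all_analysis.
From mathcomp Require Import complex.
Set Implicit Arguments. Unset Strict Implicit. Unset Printing Implicit Defensive.
Import Order.TTheory GRing.Theory Num.Theory.
Import numFieldNormedType.Exports.
Local Open Scope classical_set_scope.
Local Open Scope ring_scope.

(* The Borel sigma-algebra of a topological space: generated by the open sets.
   Its carrier is (definitionally) the topological space itself. *)
Notation borel G := (g_sigma_algebraType (@open G)).

Section Defs.
Variables (R : realType) (G : ptopologicalType).
Variables (mul : G -> G -> G) (inv : G -> G) (e : G).

Definition locally_compact_group : Prop :=
  (forall x y z, mul x (mul y z) = mul (mul x y) z) /\
  (forall x, mul e x = x /\ mul x e = x) /\
  (forall x, mul (inv x) x = e /\ mul x (inv x) = e) /\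
  continuous (fun q : G * G => mul q.1 (inv q.2)) /\
  hausdorff_space G /\
  locally_compact [set: G].

Definition left_haar_measure (mu : {measure set (borel G) -> \bar R}) : Prop :=
  (forall (a : G) (E : set (borel G)), measurable E ->
         mu [set mul a y | y in E] = mu E) /\
      (forall K : set G, compact K -> (mu K < +oo)%E) /\
      (forall U : set G, open U -> U !=set0 -> (0 < mu U)%E) /\
      (forall E : set (borel G), measurable E ->
         mu E = ereal_inf [set mu U | U in [set U : set G | open U /\ E `<=` U]]) /\
      (forall U : set G, open U ->
         mu U = ereal_sup [set mu K | K in [set K : set G | compact K /\ K `<=` U]]).

Definition weight (w : G -> R) : Prop :=
  (forall x, 0 < w x) /\ continuous w /\
  (forall x y, w (mul x y) <= w x * w y) /\ w e = 1.

Definition cabs (z : R[i]) : R :=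
  Num.sqrt (complex.Re z ^+ 2 + complex.Im z ^+ 2).

Variable mu : {measure set (borel G) -> \bar R}.

Definition cmeasurable (f : borel G -> R[i]) : Prop :=
  measurable_fun [set: borel G] (fun x => complex.Re (f x)) /\
  measurable_fun [set: borel G] (fun x => complex.Im (f x)).

Definition wLnorm (w : G -> R) (p : R) (f : borel G -> R[i]) : \bar R :=
  Lnorm mu p%:E (fun x : borel G => (cabs (f x) * w x)%:E).

Definition inLp (w : G -> R) (p : R) (f : borel G -> R[i]) : Prop :=
  cmeasurable f /\ (wLnorm w p f < +oo)%E.

Definition cintegral (h : borel G -> R[i]) : R[i] :=
  Complex (Rintegral mu [set: borel G] (fun y => complex.Re (h y)))
          (Rintegral mu [set: borel G] (fun y => complex.Im (h y))).

Definition conv (f g : borel G -> R[i]) : borel G -> R[i] :=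
  fun x => cintegral (fun y => f y * g (mul (inv y) x)).

Definition ltrans (x : G) (f : borel G -> R[i]) : borel G -> R[i] :=
  fun y => f (mul (inv x) y).

Definition Lp_banach_algebra (w : G -> R) (p : R) : Prop :=
  forall f g, inLp w p f -> inLp w p g ->
    inLp w p (conv f g) /\
    (wLnorm w p (conv f g) <= wLnorm w p f * wLnorm w p g)%E.

(* elements of L^p are equivalence classes modulo mu-a.e. equality *)
Definition ae_eq (f g : borel G -> R[i]) : Prop :=
  {ae mu, forall y, f y = g y}.

Definition left_multiplier (w : G -> R) (p : R)
  (L : (borel G -> R[i]) -> (borel G -> R[i])) : Prop :=
  (forall f, inLp w p f -> inLp w p (L f)) /\
  (forall f g, inLp w p f -> inLp w p g -> ae_eq f g -> ae_eq (L f) (L g)) /\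
  (forall f g (a b : R[i]), inLp w p f -> inLp w p g ->
     ae_eq (L (fun y => a * f y + b * g y)) (fun y => a * L f y + b * L g y)) /\
  (forall f g, inLp w p f -> inLp w p g -> ae_eq (L (conv f g)) (conv (L f) g)).

Definition algebra_iso (w : G -> R) (p : R)
  (L : (borel G -> R[i]) -> (borel G -> R[i])) : Prop :=
  (forall f, inLp w p f -> inLp w p (L f)) /\
      (forall f g, inLp w p f -> inLp w p g -> ae_eq f g -> ae_eq (L f) (L g)) /\
      (forall f g (a b : R[i]), inLp w p f -> inLp w p g ->
         ae_eq (L (fun y => a * f y + b * g y)) (fun y => a * L f y + b * L g y)) /\
      (forall f g, inLp w p f -> inLp w p g -> ae_eq (L (conv f g)) (conv (L f) (L g))) /\
      (forall f g, inLp w p f -> inLp w p g -> ae_eq (L f) (L g) -> ae_eq f g) /\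
      (forall g, inLp w p g -> exists2 f, inLp w p f & ae_eq (L f) g).

End Defs.

From Pilot Require Import Defs.
From HB Require Import structures.
From mathcomp Require Import all_boot all_order all_algebra.
From mathcomp Require Import all_classical all_reals all_analysis.
From mathcomp Require Import complex.
From mathcomp Require Import measurable_realfun.

Import Order.TTheory GRing.Theory Num.Theory.
Import numFieldNormedType.Exports.
Local Open Scope classical_set_scope.
Local Open Scope ring_scope.
Set Implicit Arguments. Unset Strict Implicit. Unset Printing Implicit Defensive.

(* Test the identities l(f * g) = l(f) * g and l(f * g) = l(f) * l(g), with
   l = gamma l_x, on f = g = 1_W for a relatively compact open neighbourhood W
   of e.  For almost every z they give
     gamma mu(xW ∩ zW⁻¹) = gamma² mu(xW ∩ z(xW)⁻¹),
   and as xW has positive measure such a z can be taken in xW, where the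
   left-hand set is open, nonempty and of finite measure.  If x ≠ e, W can be
   chosen so small that k u⁻¹ v ≠ x⁻¹ for k, u, v in W, which empties the
   right-hand set; if x = e both sets coincide and gamma = gamma². *)

Lemma ae_witness d (T : measurableType d) (R : realType)
    (mu : {measure set T -> \bar R}) (P : T -> Prop) (Z : set T) :
  measurable Z -> (0 < mu Z)%E -> {ae mu, forall z, P z} -> exists2 z, Z z & P z.
Proof.
move=> mZ muZ aeP; apply: contrapT => noZ.
have : mu.-negligible Z.
  by apply: negligibleS aeP => z Zz Pz; apply: noZ; exists z.
by move=> /(negligibleP mu mZ) Z0; rewrite Z0 ltxx in muZ.
Qed.

Lemma locally_compact_nbhs_interior (T : topologicalType) (t : T) :
  locally_compact [set: T] -> exists2 C : set T, open_nbhs t C° & compact C.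
Proof.
rewrite /locally_compact /locally_of => /(_ t I); rewrite withinET.
move=> [C tC [cC _]]; exists C => //.
by split; [exact: open_interior | exact: tC].
Qed.

Section group.
Variables (G : ptopologicalType) (mul : G -> G -> G) (inv : G -> G) (e : G).
Hypothesis mulA : forall x y z, mul x (mul y z) = mul (mul x y) z.
Hypothesis mul1 : forall x, mul e x = x /\ mul x e = x.
Hypothesis mulV : forall x, mul (inv x) x = e /\ mul x (inv x) = e.

Lemma mul1g x : mul e x = x. Proof. by case: (mul1 x). Qed.
Lemma mulg1 x : mul x e = x. Proof. by case: (mul1 x). Qed.
Lemma mulVg x : mul (inv x) x = e. Proof. by case: (mulV x). Qed.
Lemma mulgV x : mul x (inv x) = e. Proof. by case: (mulV x). Qed.
Lemma mulKg x y : mul (inv x) (mul x y) = y.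
Proof. by rewrite mulA mulVg mul1g. Qed.
Lemma mulKVg x y : mul x (mul (inv x) y) = y.
Proof. by rewrite mulA mulgV mul1g. Qed.
Lemma invK x : inv (inv x) = x.
Proof. by rewrite -[RHS](mulKg (inv x)) mulVg mulg1. Qed.
Lemma inv1 : inv e = e.
Proof. by rewrite -[LHS]mul1g mulgV. Qed.
Lemma invM x y : inv (mul x y) = mul (inv y) (inv x).
Proof. by rewrite -[RHS]mul1g -(mulVg (mul x y)) -!mulA mulKVg mulgV mulg1. Qed.

Definition lcoset (a : G) (A : set G) : set G := [set y | A (mul (inv a) y)].

Lemma lcoset1 A : lcoset e A = A.
Proof. by apply/funext => y; rewrite /lcoset /= inv1 mul1g. Qed.

Lemma lcosetE a A : lcoset a A = [set mul a y | y in A].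
Proof.
apply/seteqP; split => y /=.
  by move=> Ay; exists (mul (inv a) y); rewrite ?mulKVg.
by move=> [v Av <-]; rewrite /lcoset /= mulKg.
Qed.

Hypothesis divC : continuous (fun q : G * G => mul q.1 (inv q.2)).

Section cvg.
Context {T : Type} (F : set_system T) {FF : Filter F}.

Lemma cvg_div (f g : T -> G) a b : f @ F --> a -> g @ F --> b ->
  (fun t => mul (f t) (inv (g t))) @ F --> mul a (inv b).
Proof.
exact: (@continuous2_cvg _ _ _ _ F FF f g (fun a b => mul a (inv b)) a b (@divC (a, b))).
Qed.

Lemma cvg_inv (g : T -> G) b : g @ F --> b -> (fun t => inv (g t)) @ F --> inv b.
Proof.
move=> gb; have := cvg_div (@cvg_cst _ e _ F FF) gb.
by rewrite mul1g (eq_cvg _ _ (fun t => mul1g (inv (g t)))).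
Qed.

Lemma cvg_mul (f g : T -> G) a b : f @ F --> a -> g @ F --> b ->
  (fun t => mul (f t) (g t)) @ F --> mul a b.
Proof.
move=> fa gb; have := cvg_div fa (cvg_inv gb).
by rewrite invK (eq_cvg _ _ (fun t => congr1 (mul (f t)) (invK (g t)))).
Qed.
End cvg.

Lemma open_lcoset a A : open A -> open (lcoset a A).
Proof.
by move=> oA; apply: open_comp => // y _; exact: cvg_mul (cvg_cst _) cvg_id.
Qed.

Definition conv_set (A B : set G) (z : G) : set G :=
  A `&` [set y | B (mul (inv y) z)].

Lemma open_conv_set A B z : open A -> open B -> open (conv_set A B z).
Proof.
move=> oA oB; apply: openI => //; apply: open_comp => // y _.
exact: cvg_mul (cvg_inv cvg_id) (cvg_cst _).
Qed.

Hypothesis hG : hausdorff_space G.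
Hypothesis lcG : locally_compact [set: G].

Lemma open_nbhs_avoid_divmul t : t <> e -> exists2 U : set G, open_nbhs e U &
  forall k u v, U k -> U u -> U v -> mul (mul k (inv u)) v <> t.
Proof.
move=> te.
have nt : nbhs (mul (mul e (inv e)) e) (~` [set t]).
  rewrite inv1 !mul1g; apply: open_nbhs_nbhs; split; last by move=> /esym.
  by rewrite openC; exact/accessible_closed_set1/hausdorff_accessible.
have mul_cvg a b : (fun q : G * G => mul q.1 q.2) @ (a, b) --> mul a b.
  by apply: cvg_mul; [exact: cvg_fst | exact: cvg_snd].
have div_cvg a b : (fun q : G * G => mul q.1 (inv q.2)) @ (a, b) --> mul a (inv b).
  by apply: cvg_div; [exact: cvg_fst | exact: cvg_snd].
have [[A Q2] /= [nA nQ2] sub1] := mul_cvg _ _ _ nt.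
have [[P Q1] /= [nP nQ1] sub2] := div_cvg e e _ nA.
exists (P `&` Q1 `&` Q2)°.
  by split; [exact: open_interior | do 2?apply: filterI].
move=> k u v /interior_subset [[Pk _] _] /interior_subset [[_ Q1u] _].
move=> /interior_subset [_ Q2v].
exact: (sub1 (_, v) (conj (sub2 (k, u) (conj Pk Q1u)) Q2v)).
Qed.

Section weighted_Lp.
Variables (R : realType) (mu : {measure set (borel G) -> \bar R}) (w : G -> R) (p : R).

Lemma open_borel_measurable (A : set G) : open A -> measurable (A : set (borel G)).
Proof. by move=> oA; apply: sub_sigma_algebra. Qed.

Lemma compact_borel_measurable (C : set G) : compact C -> measurable (C : set (borel G)).
Proof.
move=> cC; rewrite -[C]setCK; apply: measurableC; apply: open_borel_measurable.
exact/closed_openC/(compact_closed hG).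
Qed.

Definition cindic (A : set G) : borel G -> R[i] := fun y => ((\1_A y : R)%:C)%C.

Lemma Re_conv_cindic (a b : R) A B z :
  measurable (conv_set A B z : set (borel G)) ->
  complex.Re (Defs.conv mul inv mu (fun y => a%:C * cindic A y)%C
                                   (fun y => b%:C * cindic B y)%C z) =
  a * b * fine (mu (conv_set A B z)).
Proof.
move=> mS; rewrite -Rintegral_cst // Rintegral_mkcond patch_indic /=.
congr Rintegral; apply/funext => y.
by rewrite /= !(mul0r, mulr0, addr0, subr0) indicI mulrACA.
Qed.

Hypothesis wC : continuous w.
Hypothesis p1 : 1 <= p.
Hypothesis compact_finite : forall K : set G, compact K -> (mu K < +oo)%E.

Lemma measurable_weight : measurable_fun [set: borel G] (w : borel G -> R).
Proof.
apply: (measurability _ (RGenOpens.measurableE R)).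
move=> _ [_ [a [b ->] <-]]; apply: measurableI => //; apply: open_borel_measurable.
by apply: open_comp; [move=> y _; exact: wC | exact: interval_open].
Qed.

Lemma inLp_cindic (A C : set G) : measurable (A : set (borel G)) -> compact C ->
  A `<=` C -> inLp mu w p (cindic A).
Proof.
move=> mA cC AC; split; first by split; [exact: measurable_indic | exact: measurable_cst].
have [M [_ wM]] :=
  compact_bounded (continuous_compact (continuous_subspaceT (fun y => @wC y)) cC).
have p0 : 0 <= p by rewrite (le_trans ler01).
rewrite /wLnorm unlock; apply: poweR_lty.
have cabs_cindic y : cabs (cindic A y) = \1_A y.
  by rewrite /cabs /= expr0n /= addr0 sqrtr_sqr ger0_norm.
under eq_integral do rewrite cabs_cindic abse_EFin poweR_EFin.
have bound : (\int[mu]_y (`|\1_A y * w y| `^ p)%:E <=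
    \int[mu]_y ((M + 1) `^ p * \1_A y)%:E)%E.
  apply: ge0_le_integral => //.
  - apply/measurable_EFinP; apply: (measurableT_comp (measurable_powR p)).
    apply: measurableT_comp => //.
    by apply: measurable_funM; [exact: measurable_indic | exact: measurable_weight].
  - by apply/measurable_EFinP/measurable_funM => //; exact: measurable_indic.
  move=> y _; rewrite lee_fin indicE.
  have [/set_mem Ay|_] := boolP (y \in A); last first.
    by rewrite mul0r mulr0 normr0 powR0 // gt_eqF // (lt_le_trans ltr01).
  have wy : `|w y| <= M + 1.
    by apply: (wM (M + 1)); [rewrite ltrDl | exists y => //; exact: AC].
  by rewrite mul1r mulr1; apply: ge0_ler_powR; rewrite // nnegrE (le_trans _ wy).
apply: le_lt_trans bound _.
rewrite (@integralZl_indic _ _ _ mu setT measurableT (fun _ => A)) //; last first.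
  by move=> /lt_geF; rewrite powR_ge0.
rewrite integral_indic // setIT lte_mul_pinfty ?lee_fin ?powR_ge0 //.
apply: le_lt_trans (compact_finite cC).
by apply: le_measure; rewrite ?inE //; exact: compact_borel_measurable.
Qed.

Hypothesis haar_lmul : forall (a : G) (E : set (borel G)), measurable E ->
  mu [set mul a y | y in E] = mu E.
Hypothesis haar_open_pos : forall U : set G, open U -> U !=set0 -> (0 < mu U)%E.

Lemma measure_lcoset a (A : set G) : measurable (A : set (borel G)) ->
  mu (lcoset a A) = mu A.
Proof. by move=> mA; rewrite lcosetE haar_lmul. Qed.

Section translation_multiplier.
Variables (gam : R) (x : G).
Local Notation L := (fun f y => (gam%:C)%C * ltrans mul inv x f y).
Hypothesis L_multiplier : forall f g, inLp mu w p f -> inLp mu w p g ->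
  Defs.ae_eq mu (L (Defs.conv mul inv mu f g)) (Defs.conv mul inv mu (L f) g).
Hypothesis L_morphism : forall f g, inLp mu w p f -> inLp mu w p g ->
  Defs.ae_eq mu (L (Defs.conv mul inv mu f g)) (Defs.conv mul inv mu (L f) (L g)).

Lemma conv_lcoset_balance (W C : set G) : open W -> W e -> compact C -> W `<=` C ->
  exists z, [/\ lcoset x W z,
    gam * fine (mu (conv_set (lcoset x W) W z)) =
      gam ^+ 2 * fine (mu (conv_set (lcoset x W) (lcoset x W) z)) &
    0 < fine (mu (conv_set (lcoset x W) W z))].
Proof.
move=> oW We cC WC; have mW := open_borel_measurable oW.
have iW := inLp_cindic mW cC WC.
have aeW : {ae mu, forall z, Defs.conv mul inv mu (L (cindic W)) (cindic W) z =
    Defs.conv mul inv mu (L (cindic W)) (L (cindic W)) z}.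
  by apply: filterS2 (L_multiplier iW iW) (L_morphism iW iW) => z <- <-.
have oxW := open_lcoset x oW.
have xWx : lcoset x W x by rewrite /lcoset /= mulVg.
have [z xWz convE] := ae_witness (open_borel_measurable oxW)
  (haar_open_pos oxW (ex_intro _ x xWx)) aeW.
have oS1 := open_conv_set z oxW oW.
have oS2 := open_conv_set z oxW oxW.
have S1z : conv_set (lcoset x W) W z z by split; rewrite //= mulVg.
have S1_fin : (mu (conv_set (lcoset x W) W z) < +oo)%E.
  apply: (@le_lt_trans _ _ (mu (lcoset x W))).
    apply: le_measure; rewrite ?inE; try exact: open_borel_measurable.
    by move=> ? [].
  rewrite measure_lcoset //; apply: le_lt_trans (compact_finite cC).
  by apply: le_measure; rewrite ?inE //; exact: compact_borel_measurable.
exists z; split => //.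
  have cindic1 : cindic W = (fun y => 1%:C * cindic W y)%C.
    by apply/funext => y; rewrite mul1r.
  move: (congr1 (@complex.Re R) convE); rewrite {2}cindic1.
  rewrite !Re_conv_cindic ?mulr1 ?expr2 //; exact: open_borel_measurable.
apply: fine_gt0; rewrite S1_fin andbT.
by apply: haar_open_pos => //; exists z.
Qed.

Hypothesis gam_gt0 : 0 < gam.

Lemma translation_point_trivial : x = e.
Proof.
apply: contrapT => xe.
have invxe : inv x <> e by move=> xe'; apply: xe; rewrite -(invK x) xe' inv1.
have [U [oU Ue] avoid] := open_nbhs_avoid_divmul invxe.
have [C [oC Ce] cC] := locally_compact_nbhs_interior e lcG.
have [z [xWz balance S1_gt0]] := conv_lcoset_balance (openI oU oC) (conj Ue Ce) cC
  (fun y => fun '(conj _ Cy) => interior_subset Cy).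
set W := U `&` C° in xWz balance S1_gt0.
have S2_empty : conv_set (lcoset x W) (lcoset x W) z = set0.
  apply/seteqP; split => // y [[/= Uv _] [/= Uk _]].
  apply: (avoid _ _ _ Uk (proj1 xWz) Uv).
  by rewrite invM invK -!mulA mulKVg mulKVg mulVg mulg1.
move: balance; rewrite S2_empty measure0 mulr0 => /eqP.
by rewrite mulf_eq0 !gt_eqF.
Qed.

Lemma scaled_translation_trivial : gam = 1 /\ x = e.
Proof.
split; last exact: translation_point_trivial.
have [C oCe cC] := locally_compact_nbhs_interior e lcG.
have [z [_ balance S1_gt0]] := conv_lcoset_balance oCe.1 oCe.2 cC (@interior_subset _ C).
rewrite translation_point_trivial lcoset1 expr2 in balance S1_gt0.
have := mulIf (lt0r_neq0 S1_gt0) balance; rewrite -{1}[gam]mulr1.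
by move=> /(mulfI (lt0r_neq0 gam_gt0)) /esym.
Qed.

End translation_multiplier.
End weighted_Lp.
End group.

Theorem lemma1p4 (R : realType) (G : ptopologicalType)
  (mul : G -> G -> G) (inv : G -> G) (e : G)
  (mu : {measure set (borel G) -> \bar R}) (w : G -> R) (p : R)
  (gamma : R) (x : G) :
  locally_compact_group mul inv e ->
  left_haar_measure mul mu ->
  weight mul e w ->
  1 <= p ->
  Lp_banach_algebra mul inv mu w p ->
  0 < gamma ->
  left_multiplier mul inv mu w p (fun f => fun y => (gamma%:C)%C * ltrans mul inv x f y) ->
  algebra_iso mul inv mu w p (fun f => fun y => (gamma%:C)%C * ltrans mul inv x f y) ->
  gamma = 1 /\ x = e.
Proof.
move=> [mulA [mul1 [mulV [divC [hG lcG]]]]] [haar_lmul [compact_finite [haar_open_pos _]]].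
move=> [_ [wC _]] p1 _ gamma_gt0 [_ [_ [_ L_multiplier]]] [_ [_ [_ [L_morphism _]]]].
exact: (scaled_translation_trivial mulA mul1 mulV divC hG lcG wC p1
  compact_finite haar_lmul haar_open_pos L_multiplier L_morphism gamma_gt0).
Qed.
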